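(* For all natural numbers $m$ and $n$, every vertex of the polytope $\operatorname{Hom}(\Box_m,\triangle_n)$ has rank $0$ or $1$; that is, $$\operatorname{vert}(\Box_m,\triangle_n)=\operatorname{vert}^{(0)}(\Box_m,\triangle_n)\cup\operatorname{vert}^{(1)}(\Box_m,\triangle_n).$$
   Context: For convex polytopes $P,Q$ (in real finite-dimensional vector spaces), $\operatorname{Hom}(P,Q)$ denotes the set of maps $P\to Q$ that are restrictions of affine maps $\operatorname{Aff}(P)\to\operatorname{Aff}(Q)$ between the affine hulls; viewed as a subset of the real affine space of all affine maps $\operatorname{Aff}(P)\to\operatorname{Aff}(Q)$, it is a convex polytope. $\operatorname{vert}(P,Q)$ denotes its set of vertices (called vertex maps). The rank of $f\in\operatorname{Hom}(P,Q)$ is $\dim\operatorname{Aff}(f(P))$, and $\operatorname{vert}^{(k)}(P,Q)$ is the set of vertex maps of rank $k$. $\triangle_n=\operatorname{conv}(0,e_1,\ldots,e_n)\subset\mathbb{R}^n$ and $\Box_m=\operatorname{conv}\{(a_1,\ldots,a_m): a_i=\pm1\}\subset\mathbb{R}^m$, where $e_i$ are standard basis vectors. *)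

From HB Require Import structures.
From mathcomp Require Import all_boot all_order all_algebra.
From mathcomp Require Import reals.
Set Implicit Arguments. Unset Strict Implicit. Unset Printing Implicit Defensive.
Import Order.TTheory GRing.Theory Num.Theory.
Local Open Scope ring_scope.

Definition conv_pts (R : realType) (k : nat) (I : finType) (p : I -> 'rV[R]_k)
  (x : 'rV[R]_k) : Prop :=
  exists l : I -> R, (forall i, 0 <= l i) /\ \sum_i l i = 1 /\ x = \sum_i l i *: p i.

Definition cube_vert (R : realType) (m : nat) (s : {ffun 'I_m -> bool}) : 'rV[R]_m :=
  \row_j (if s j then 1 else -1).
Definition cube (R : realType) (m : nat) : 'rV[R]_m -> Prop :=
  conv_pts (@cube_vert R m).

Definition simplex_vert (R : realType) (n : nat) (o : option 'I_n) : 'rV[R]_n :=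
  match o with None => 0 | Some i => \row_j (i == j)%:R end.
Definition simplex (R : realType) (n : nat) : 'rV[R]_n -> Prop :=
  conv_pts (@simplex_vert R n).

(* Affine maps R^m -> R^n (affine hulls of Box_m and Delta_n), as pairs (A, b),
   acting by x |-> x *m A + b. The affine structure on affine maps is the
   componentwise one on pairs. *)
Definition affmap (R : realType) (m n : nat) := ('M[R]_(m, n) * 'rV[R]_n)%type.
Definition aff_app (R : realType) (m n : nat) (f : affmap R m n) (x : 'rV[R]_m)
  : 'rV[R]_n := x *m f.1 + f.2.

Definition Hom_cube_simplex (R : realType) (m n : nat) (f : affmap R m n) : Prop :=
  forall x, cube x -> simplex (aff_app f x).

Definition is_vertex (R : realType) (m n : nat) (P : affmap R m n -> Prop)
  (f : affmap R m n) : Prop :=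
  P f /\ forall (g h : affmap R m n) (t : R), P g -> P h -> 0 < t < 1 ->
    f.1 = t *: g.1 + (1 - t) *: h.1 -> f.2 = t *: g.2 + (1 - t) *: h.2 -> g = h.

Definition aff_indep (R : realType) (n k : nat) (p : 'I_k.+1 -> 'rV[R]_n) : bool :=
  row_free (\matrix_(i < k) (p (lift ord0 i) - p ord0)).

Definition aff_dim_eq (R : realType) (n : nat) (S : 'rV[R]_n -> Prop) (k : nat) : Prop :=
  (exists p : 'I_k.+1 -> 'rV[R]_n, (forall i, S (p i)) /\ aff_indep p) /\
  ~ (exists p : 'I_k.+2 -> 'rV[R]_n, (forall i, S (p i)) /\ aff_indep p).

Definition hom_rank_eq (R : realType) (m n : nat) (f : affmap R m n) (k : nat) : Prop :=
  aff_dim_eq (fun y => exists x, cube x /\ y = aff_app f x) k.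

(* A map [x |-> x *m A + b] sends the cube into the simplex iff
   [\sum_i |A i j| <= b j] for every [j] and
   [\sum_j b j + \sum_i |\sum_j A i j| <= 1]: each constraint is attained at a
   cube vertex whose signs are chosen accordingly. If two rows [i1], [i2] of [A]
   were nonzero, scaling them by [1 + t c2] and [1 - t c1] (where [c] is the
   row's contribution to both constraints), resp. by [1 - t c2] and [1 + t c1],
   and shifting [b] to compensate, gives two distinct maps of Hom whose midpoint
   is [(A, b)]. So a vertex has at most one nonzero row, hence [rank A <= 1],
   and the image of the cube is a point or a segment. *)

From HB Require Import structures.
From mathcomp Require Import all_boot all_order all_algebra.
From mathcomp Require Import reals.
From mathcomp Require Import ring lra.
Set Implicit Arguments. Unset Strict Implicit. Unset Printing Implicit Defensive.
Import Order.TTheory GRing.Theory Num.Theory.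
Local Open Scope ring_scope.

Lemma conv_pts_vert (R : realType) k (I : finType) (p : I -> 'rV[R]_k) i :
  conv_pts p (p i).
Proof.
exists (fun i' => (i' == i)%:R); split=> [i'|]; first exact: ler0n.
split; first by rewrite (bigD1 i) //= eqxx big1 ?addr0 // => i' /negbTE ->.
by rewrite (bigD1 i) //= eqxx scale1r big1 ?addr0 // => i' /negbTE ->; rewrite scale0r.
Qed.

Lemma sum_two_points (R : pzRingType) (I : finType) (i1 i2 : I) (a1 a2 : R)
    (F : I -> R) : i1 != i2 ->
  \sum_i (if i == i1 then a1 else if i == i2 then a2 else 0) * F i
    = a1 * F i1 + a2 * F i2.
Proof.
move=> i12; rewrite (bigD1 i1) // (bigD1 i2) /= 1?eq_sym // eqxx.
rewrite eq_sym (negbTE i12) eqxx big1 ?addr0 // => i /andP[/negbTE -> /negbTE ->].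
exact: mul0r.
Qed.

Lemma sum_option (V : nmodType) (I : finType) (F : option I -> V) :
  \sum_o F o = F None + \sum_i F (Some i).
Proof.
rewrite (bigD1 None) //= (reindex_omap Some id) => [|[]//].
by congr (_ + _); apply: eq_bigl => i; rewrite eqxx.
Qed.

Section Simplex.
Variables (R : realType) (n : nat).

Lemma simplexP (y : 'rV[R]_n) :
  simplex y <-> (forall j, 0 <= y 0 j) /\ \sum_j y 0 j <= 1.
Proof.
split=> [[l [l0 [l1 ->]]]|[y0 y1]].
  have coord j o : @simplex_vert R n o 0 j = if o is Some i then (i == j)%:R else 0.
    by case: o => [i|]; rewrite !mxE.
  split=> [j|].
    rewrite summxE; apply: sumr_ge0 => o _; rewrite mxE coord.
    by apply: mulr_ge0 => //; case: o.
  under eq_bigr do rewrite summxE.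
  rewrite exchange_big /= -l1; apply: ler_sum => o _.
  under eq_bigr do rewrite mxE coord.
  rewrite -mulr_sumr ler_piMr //; case: o => [i|]; last by rewrite big1.
  by rewrite (bigD1 i) //= eqxx big1 ?addr0 // => j /negbTE; rewrite eq_sym => ->.
exists (fun o => if o is Some i then y 0 i else 1 - \sum_j y 0 j).
split; first by case=> //; rewrite subr_ge0.
rewrite sum_option /= subrK; split=> //.
apply/rowP => j; rewrite summxE sum_option !mxE mulr0 add0r.
rewrite (bigD1 j) //= !mxE eqxx mulr1 big1 ?addr0 // => i ij.
by rewrite !mxE (negbTE ij) mulr0.
Qed.

End Simplex.

Section Cube.
Variables (R : realType) (m : nat).

Lemma cube_coord_norm (x : 'rV[R]_m) i : cube x -> `|x 0 i| <= 1.
Proof.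
case=> l [l0 [l1 ->]]; rewrite summxE -l1.
apply: le_trans (ler_norm_sum _ _ _) (ler_sum _ _) => s _.
by rewrite !mxE normrM ger0_norm //; case: (s i); rewrite ?normrN normr1 mulr1.
Qed.

Lemma cube_vert_sign (v : 'I_m -> R) :
  \sum_i @cube_vert R m [ffun i => 0 <= v i] 0 i * v i = \sum_i `|v i|.
Proof.
apply: eq_bigr => i _; rewrite !mxE ffunE.
have [v0|v0] := lerP 0 (v i); first by rewrite mul1r ger0_norm.
by rewrite mulN1r ltr0_norm.
Qed.

Lemma cube_coord_mul_bound (x : 'rV[R]_m) i (a : R) :
  cube x -> - `|a| <= x 0 i * a <= `|a|.
Proof.
by move/(cube_coord_norm i) => x1; rewrite -ler_norml normrM ler_piMl.
Qed.

End Cube.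

Section HomCubeSimplex.
Variables (R : realType) (m n : nat).
Implicit Types (A : 'M[R]_(m, n)) (b : 'rV[R]_n) (f : affmap R m n).

Definition hom_ineqs A b : Prop :=
  (forall j, \sum_i `|A i j| <= b 0 j) /\
  \sum_j b 0 j + \sum_i `|\sum_j A i j| <= 1.

Lemma aff_app_coord f x j :
  aff_app f x 0 j = \sum_i x 0 i * f.1 i j + f.2 0 j.
Proof. by rewrite !mxE. Qed.

Lemma aff_app_coord_sum f x :
  \sum_j aff_app f x 0 j = \sum_i x 0 i * \sum_j f.1 i j + \sum_j f.2 0 j.
Proof.
under eq_bigr do rewrite aff_app_coord; rewrite big_split /= exchange_big.
by congr (_ + _); apply: eq_bigr => i _; rewrite mulr_sumr.
Qed.

Lemma Hom_cube_simplexP f : Hom_cube_simplex f <-> hom_ineqs f.1 f.2.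
Proof.
split=> [Hf | [col_le sum_le] x /cube_coord_mul_bound x_bnd]; last first.
  apply/simplexP; split=> [j|].
    have : \sum_i - `|f.1 i j| <= \sum_i x 0 i * f.1 i j.
      by apply: ler_sum => i _; have /andP[] := x_bnd i (f.1 i j).
    rewrite aff_app_coord sumrN; have := col_le j; lra.
  rewrite aff_app_coord_sum addrC; apply: le_trans sum_le; rewrite lerD2l.
  by apply: ler_sum => i _; have /andP[] := x_bnd i (\sum_j f.1 i j).
split=> [j|].
  pose s := [ffun i => 0 <= - f.1 i j].
  have /simplexP[/(_ j) + _] := Hf _ (conv_pts_vert (@cube_vert R m) s).
  rewrite aff_app_coord -[X in X + _]opprK -sumrN.
  under eq_bigr do rewrite -mulrN.
  by rewrite cube_vert_sign addrC subr_ge0; under eq_bigr do rewrite normrN.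
pose s := [ffun i => 0 <= \sum_j f.1 i j].
have /simplexP[_] := Hf _ (conv_pts_vert (@cube_vert R m) s).
by rewrite aff_app_coord_sum cube_vert_sign addrC.
Qed.

End HomCubeSimplex.

Section RowPerturbation.
Variables (R : realType) (m n : nat).
Implicit Types (A : 'M[R]_(m, n)) (b : 'rV[R]_n) (d : 'I_m -> R).

Definition row_load A i : R := \sum_j `|A i j| + `|\sum_j A i j|.

Definition perturb_rows d A : 'M[R]_(m, n) := \matrix_(i, j) ((1 + d i) * A i j).

Definition perturb_shift d A b : 'rV[R]_n :=
  \row_j (b 0 j + \sum_i d i * `|A i j|).

Lemma row_load_gt0 A i : row i A != 0 -> 0 < row_load A i.
Proof.
apply: contraNT; rewrite -leNgt => load_le0; apply/eqP/rowP => j; rewrite !mxE.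
have sum_norm0 : \sum_j `|A i j| = 0.
  apply/le_anti/andP; split; last exact: sumr_ge0.
  by apply: le_trans load_le0; rewrite /row_load lerDl normr_ge0.
apply/eqP/normr0P.
exact: (psumr_eq0P (fun j _ => normr_ge0 (A i j)) sum_norm0).
Qed.

Lemma hom_ineqs_perturb d A b :
  (forall i, -1 <= d i) -> \sum_i d i * row_load A i <= 0 ->
  hom_ineqs A b -> hom_ineqs (perturb_rows d A) (perturb_shift d A b).
Proof.
move=> d_ge load_le0 [col_le sum_le].
have w_ge0 i : 0 <= 1 + d i by have := d_ge i; lra.
have normM i x : `|(1 + d i) * x| = `|x| + d i * `|x|.
  by rewrite normrM ger0_norm // mulrDl mul1r.
split=> [j|].
  under eq_bigr do rewrite mxE normM.
  by rewrite big_split /= mxE lerD2r.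
under eq_bigr do rewrite mxE.
under [X in _ + X]eq_bigr
  do rewrite (eq_bigr _ (fun j _ => mxE _ _ _ _)) -mulr_sumr normM.
rewrite !big_split /= exchange_big /=.
under [X in _ + X + _ <= _]eq_bigr do rewrite -mulr_sumr.
have load_split : \sum_i d i * row_load A i =
    \sum_i d i * \sum_j `|A i j| + \sum_i d i * `|\sum_j A i j|.
  by rewrite -big_split; apply: eq_bigr => i _; rewrite mulrDr.
move: load_le0; rewrite load_split; lra.
Qed.

End RowPerturbation.

Section Vertex.
Variables (R : realType) (m n : nat) (A : 'M[R]_(m, n)) (b : 'rV[R]_n).
Hypothesis Ab_vertex : is_vertex (@Hom_cube_simplex R m n) (A, b).

(* [(A, b)] is the midpoint of the perturbations by [d] and [- d]. *)
Lemma vertex_perturb_rows d :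
  (forall i, `|d i| <= 1) -> \sum_i d i * row_load A i = 0 ->
  forall i, d i != 0 -> row i A = 0.
Proof.
move=> d_le1 load0 i di0; have [/Hom_cube_simplexP Ab_ineqs Ab_ext] := Ab_vertex.
pose pert s : affmap R m n :=
  (perturb_rows (fun i => s * d i) A, perturb_shift (fun i => s * d i) A b).
have pert_hom s : s = 1 \/ s = -1 -> Hom_cube_simplex (pert s).
  move=> s_pm; apply/Hom_cube_simplexP/hom_ineqs_perturb => [k||//].
    by have := d_le1 k; rewrite ler_norml => /andP[]; case: s_pm => ->; lra.
  by under eq_bigr do rewrite -mulrA; rewrite -mulr_sumr load0 mulr0.
have : pert 1 = pert (-1).
  apply: (Ab_ext _ _ 2^-1 (pert_hom 1 (or_introl erefl))
                          (pert_hom (-1) (or_intror erefl))).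
  - by rewrite invr_gt0 invf_lt1 //; lra.
  - by apply/matrixP => k j; rewrite !mxE; field.
  - apply/rowP => j; rewrite !mxE /=; under eq_bigr do rewrite mul1r.
    under [X in _ = _ + _ * (_ + X)]eq_bigr do rewrite mulN1r mulNr.
    by rewrite sumrN; field.
move/(congr1 (fun g : affmap R m n => g.1)) => /matrixP same_rows.
apply/rowP => j; have := same_rows i j; rewrite !mxE mul1r mulN1r => /eqP.
have -> : 1 - d i = (1 + d i) - 2 * d i by ring.
rewrite mulrBl -subr_eq0 opprB addrC subrK !mulf_eq0 pnatr_eq0 (negbTE di0).
by move/eqP.
Qed.

Lemma vertex_rows_zero i1 i2 : i1 != i2 -> row i1 A = 0 \/ row i2 A = 0.
Proof.
move=> i12; have [|nz1] := eqVneq (row i1 A) 0; first by left.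
have [|nz2] := eqVneq (row i2 A) 0; first by right.
have c1_gt0 := row_load_gt0 nz1; have c2_gt0 := row_load_gt0 nz2.
set c1 := row_load A i1 in c1_gt0; set c2 := row_load A i2 in c2_gt0.
have c12_gt0 : 0 < c1 + c2 by lra.
have frac_le1 c : 0 < c -> c <= c1 + c2 -> `|c / (c1 + c2)| <= 1.
  move=> c_gt0 c_le; rewrite ger0_norm; last by rewrite divr_ge0 // ltW.
  by rewrite ler_pdivrMr // mul1r.
pose d i :=
  if i == i1 then c2 / (c1 + c2) else if i == i2 then - (c1 / (c1 + c2)) else 0.
have d_le1 i : `|d i| <= 1.
  rewrite /d; case: ifP => _; first by apply: frac_le1; lra.
  by case: ifP => _; rewrite ?normrN ?normr0 //; apply: frac_le1; lra.
have load0 : \sum_i d i * row_load A i = 0.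
  by rewrite sum_two_points // -/c1 -/c2; field; rewrite gt_eqF.
have d1_nz : d i1 != 0 by rewrite /d eqxx mulf_neq0 ?invr_eq0 ?gt_eqF.
by move: nz1; rewrite (vertex_perturb_rows d_le1 load0 d1_nz) eqxx.
Qed.

Lemma vertex_rank_le1 : (\rank A <= 1)%N.
Proof.
have [i0 /negbTE nz0|rows0] := pickP (fun i => row i A != 0); last first.
  suff -> : A = 0 by rewrite mxrank0.
  by apply/row_matrixP => i; rewrite row0; apply/eqP/negbFE/rows0.
apply: leq_trans (rank_leq_row (row i0 A)); apply/mxrankS/row_subP => i.
have [-> //|i_ne] := eqVneq i i0.
by case: (vertex_rows_zero i_ne) => [-> | /eqP]; rewrite ?sub0mx ?nz0.
Qed.

End Vertex.

Section HomImage.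
Variables (R : realType) (m n : nat).
Implicit Types (f : affmap R m n).
Local Notation vert := (@cube_vert R m).

Definition hom_image f (y : 'rV[R]_n) : Prop := exists x, cube x /\ y = aff_app f x.

Lemma hom_image_cube_vert f s : hom_image f (aff_app f (vert s)).
Proof. by exists (vert s); split=> //; apply: conv_pts_vert. Qed.

Lemma hom_image_no_indep f k : (\rank f.1 <= k)%N ->
  ~ exists p : 'I_k.+2 -> 'rV[R]_n, (forall i, hom_image f (p i)) /\ aff_indep p.
Proof.
move=> rk [p [p_img]]; rewrite /aff_indep -row_leq_rank ltnNge => /negP; apply.
apply: leq_trans rk; apply/mxrankS/row_subP => i; rewrite rowK.
have [x0 [_ ->]] := p_img ord0; have [x1 [_ ->]] := p_img (lift ord0 i).
by rewrite /aff_app opprD addrACA subrr addr0 -mulNmx addmx_sub ?submxMl.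
Qed.

Lemma hom_rank_eq0 f : f.1 = 0 -> hom_rank_eq f 0.
Proof.
move=> f0; split; last by apply: hom_image_no_indep; rewrite f0 mxrank0.
exists (fun _ => aff_app f (vert [ffun => true])).
by split=> [i|]; [apply: hom_image_cube_vert | rewrite /aff_indep -row_leq_rank].
Qed.

Lemma hom_rank_eq1 f : f.1 != 0 -> (\rank f.1 <= 1)%N -> hom_rank_eq f 1.
Proof.
move=> f_nz rk; split; last exact: hom_image_no_indep.
have [i0 row_nz] : exists i0, row i0 f.1 != 0.
  apply/existsP; apply: contraNT f_nz => /existsPn rows0.
  by apply/eqP/row_matrixP => i; rewrite row0; apply/eqP/negbNE/rows0.
pose s0 : {ffun 'I_m -> bool} := [ffun i => i != i0].
pose s1 : {ffun 'I_m -> bool} := [ffun=> true].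
have vert_diff : vert s1 - vert s0 = 2 *: delta_mx 0 i0.
  apply/rowP => i; rewrite !mxE !ffunE eq_sym.
  by case: eqP => _ /=; rewrite ?mulr1 ?mulr0; [rewrite opprK | rewrite subrr].
have img_diff : aff_app f (vert s1) - aff_app f (vert s0) = 2 *: row i0 f.1.
  rewrite /aff_app opprD addrACA subrr addr0 -mulNmx -mulmxDl vert_diff.
  by rewrite -scalemxAl rowE.
exists (fun i : 'I_2 => aff_app f (vert (if i == ord0 then s0 else s1))).
split=> [i|]; first exact: hom_image_cube_vert.
rewrite /aff_indep -row_leq_rank lt0n mxrank_eq0; apply: contra row_nz.
move=> /eqP/(congr1 (row 0)); rewrite rowK row0 /= img_diff => /eqP.
by rewrite scaler_eq0 pnatr_eq0.
Qed.

End HomImage.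

Theorem theorem4p1 (R : realType) (m n : nat) (f : affmap R m n) :
  is_vertex (@Hom_cube_simplex R m n) f ->
  hom_rank_eq f 0 \/ hom_rank_eq f 1.
Proof.
case: f => A b Ab_vertex.
have [A0 | A_nz] := eqVneq A 0; [left; exact: hom_rank_eq0 | right].
exact: (@hom_rank_eq1 R m n (A, b) A_nz (vertex_rank_le1 Ab_vertex)).
Qed.
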